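(* Let $a,b,d>0$, $c>c_-$, $\phi(x)=\frac{ax^3+bx^2+cx+d}{x^3}$ ($x>0$), and let $(p,q)$ be a 2-cycle of $\phi$ with $p<q$. \begin{description} \item[(a)] If $\phi$ has a unique equilibrium $\overline{t}$, then $p<\overline{t}<q$. \item[(b)] If $\phi$ has two equilibria $\overline{t}_1<\overline{t}_2$, then for $c=c_m$ one of the following holds: $$p<\overline{t}_1<q<\overline{t}_2,\quad\text{or}\quad p<\overline{t}_1,\ q>\overline{t}_2;$$ and for $c=c_M$ one has $p<\overline{t}_1$, $q>\overline{t}_2$. \item[(c)] If $\phi$ has three equilibria $\overline{t}_1<\overline{t}_2<\overline{t}_3$, then one of the following holds: $$p<\overline{t}_1<q<\overline{t}_2,\quad\text{or}\quad p<\overline{t}_1,\ q>\overline{t}_3.$$ \end{description}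
   Context: $c_-$ is the unique negative zero of $Q(x)=4ax^3-b^2x^2-18abd\,x+27a^2d^2+4db^3$. A 2-cycle is a pair $(p,q)$ of positive numbers with $p\neq q$, $\phi(p)=q$, $\phi(q)=p$; an equilibrium is $t>0$ with $\phi(t)=t$, equivalently a positive root of $P(t)=t^4-at^3-bt^2-ct-d$. Let $c^*=-\sqrt{3bd}$ and let $c_b$ be the unique negative root of $H(x)=108x^2+(108ab+27a^3)x-9a^2b^2-32b^3$. When $c_b<\frac{b^2-12d}{3a}$, as the parameter $c$ increases from $c_b$ (with $a,b,d$ fixed), $P$ first acquires a positive double root $t_m$ at a local minimum of $P$, and later a positive double root $t_M$ at a local maximum of $P$; $c_m$ and $c_M$ denote the corresponding values of $c$. Two equilibria occur only for $c=c_m$ or $c=c_M$. *)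

From HB Require Import structures.
From mathcomp Require Import all_boot all_order all_algebra.
Set Implicit Arguments. Unset Strict Implicit. Unset Printing Implicit Defensive.
Import Order.TTheory GRing.Theory Num.Theory.
Local Open Scope ring_scope.

Section Defs.
Variable R : rcfType.

Definition phi (a b c d x : R) : R :=
  (a * x ^+ 3 + b * x ^+ 2 + c * x + d) / x ^+ 3.

Definition equilibrium (a b c d t : R) : Prop := 0 < t /\ phi a b c d t = t.

Definition two_cycle (a b c d p q : R) : Prop :=
  [/\ 0 < p, 0 < q, p != q, phi a b c d p = q & phi a b c d q = p].

Definition Ppoly (a b c d : R) : {poly R} :=
  'X^4 - a%:P * 'X^3 - b%:P * 'X^2 - c%:P * 'X - d%:P.

Definition Qpoly (a b d : R) : {poly R} :=
  (4 * a)%:P * 'X^3 - (b ^+ 2)%:P * 'X^2 - (18 * a * b * d)%:P * 'X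
  + (27 * a ^+ 2 * d ^+ 2 + 4 * d * b ^+ 3)%:P.

Definition Hpoly (a b : R) : {poly R} :=
  108%:P * 'X^2 + (108 * a * b + 27 * a ^+ 3)%:P * 'X
  - (9 * a ^+ 2 * b ^+ 2 + 32 * b ^+ 3)%:P.

Definition is_cb (a b x : R) : Prop := x < 0 /\ root (Hpoly a b) x.

Definition local_min (f : R -> R) (t : R) : Prop :=
  exists2 e : R, 0 < e & forall x, `|x - t| < e -> f t <= f x.
Definition local_max (f : R -> R) (t : R) : Prop :=
  exists2 e : R, 0 < e & forall x, `|x - t| < e -> f x <= f t.

Definition dbl_root_min (a b c d t : R) : Prop :=
  [/\ 0 < t, root (Ppoly a b c d) t, root (Ppoly a b c d)^`() t
    & local_min (fun x => (Ppoly a b c d).[x]) t].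
Definition dbl_root_max (a b c d t : R) : Prop :=
  [/\ 0 < t, root (Ppoly a b c d) t, root (Ppoly a b c d)^`() t
    & local_max (fun x => (Ppoly a b c d).[x]) t].

Definition is_cm (a b d c : R) : Prop :=
  exists cb, [/\ is_cb a b cb, cb < (b ^+ 2 - 12 * d) / (3 * a), cb <= c,
    exists t, dbl_root_min a b c d t
    & forall c', cb <= c' -> c' < c -> ~ exists t, dbl_root_min a b c' d t].

Definition is_cM (a b d c : R) : Prop :=
  exists cb, [/\ is_cb a b cb, cb < (b ^+ 2 - 12 * d) / (3 * a), cb <= c,
    exists t, dbl_root_max a b c d t
    & forall c', cb <= c' -> c' < c -> ~ exists t, dbl_root_max a b c' d t].

End Defs.

From HB Require Import structures.
From mathcomp Require Import all_boot all_order all_algebra.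
From mathcomp Require Import polyrcf ring lra.
Import Order.TTheory GRing.Theory Num.Theory.
Local Open Scope ring_scope.

(* A 2-cycle p < q forces P < 0 on ]0, p] and P(q) = q^3 (q - p) > 0, so
   every equilibrium exceeds p, q is not an equilibrium, and some equilibrium
   lies in ]p, q[.  This alone gives (a) and the first half of (b).  In the
   remaining cases q lies strictly between two consecutive positive roots of P
   with P(q) > 0.  For two roots t1 < t2 this makes P > 0 on ]t1, t2[, so
   neither root is a local maximum of P, which excludes c = c_M.  For three
   roots t1 < t2 < q < t3, writing P = (x - t1)(x - t2)(x - t3)(x - r), the
   value P(0) = -d < 0 forces r < 0, and then P(q) < 0: a contradiction. *)

Lemma near_in_open_itv {R : realFieldType} {u v t e : R} :
  u < v -> u <= t <= v -> 0 < e ->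
  exists2 w, u < w < v & `|w - t| < e.
Proof.
move=> uv /andP[ut tv] e_gt0; pose m := Num.min e (v - u).
have m_le_e : m <= e by rewrite ge_min lexx.
have m_le_vu : m <= v - u by rewrite ge_min lexx orbT.
have m_gt0 : 0 < m by rewrite lt_min e_gt0 subr_gt0.
have [t_low|t_high] := lerP t ((u + v) / 2).
- exists (t + m / 3); first by apply/andP; split; lra.
  by rewrite ltr_norml; apply/andP; split; lra.
- exists (t - m / 3); first by apply/andP; split; lra.
  by rewrite ltr_norml; apply/andP; split; lra.
Qed.

Section PolySign.
Context {R : rcfType}.
Implicit Types (P : {poly R}) (u v w x z t : R).

Lemma poly_gt0_between {P u v z w} :
  (forall x, u < x < v -> ~~ root P x) -> u < z < v -> u < w < v ->
  0 < P.[z] -> 0 < P.[w].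
Proof.
move=> noroot /andP[uz zv] /andP[uw wv] Pz_gt0.
have no_sign_change s1 s2 : u < s1 -> s1 <= s2 -> s2 < v ->
    P.[s1] * P.[s2] < 0 -> False.
  move=> us1 s12 s2v /(poly_ivtoo s12) [x /itvP x_s12 rx].
  suff /noroot : u < x < v by rewrite rx.
  by rewrite (lt_trans us1) ?(lt_trans _ s2v) ?x_s12.
have Pw_neq0 : P.[w] != 0 by rewrite -rootE; apply: noroot; rewrite uw.
rewrite lt_neqAle eq_sym Pw_neq0 /= leNgt; apply/negP => Pw_lt0.
have Pzw_lt0 : P.[z] * P.[w] < 0 by rewrite pmulr_rlt0.
have [zw|wz] := leP z w; first exact: no_sign_change Pzw_lt0.
by apply: (no_sign_change w z) => //; [exact: ltW | rewrite mulrC].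
Qed.

Lemma root_not_local_max {P u v z t} :
  (forall x, u < x < v -> ~~ root P x) -> u < z < v -> 0 < P.[z] ->
  u <= t <= v -> root P t -> ~ local_max (fun x => P.[x]) t.
Proof.
move=> noroot zuv Pz_gt0 tuv /rootP Pt [e e_gt0 max_t].
have uv : u < v by case/andP: zuv => uz zv; apply: lt_trans zv.
have [w wuv wt] := near_in_open_itv uv tuv e_gt0.
have Pw_gt0 := poly_gt0_between noroot zuv wuv Pz_gt0.
by move: (max_t w wt); rewrite Pt leNgt Pw_gt0.
Qed.

End PolySign.

Section Quartic.
Context {R : rcfType} {a b c d : R}.
Local Notation P := (Ppoly a b c d).

Lemma horner_Ppoly x : P.[x] = x ^+ 4 - a * x ^+ 3 - b * x ^+ 2 - c * x - d.
Proof. by rewrite /Ppoly !hornerE. Qed.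

Lemma phi_eq_iff {x y} : 0 < x ->
  phi a b c d x = y <-> a * x ^+ 3 + b * x ^+ 2 + c * x + d = y * x ^+ 3.
Proof.
move=> x_gt0; have x3_neq0 : x ^+ 3 != 0 by rewrite expf_neq0 // gt_eqF.
by rewrite /phi; split=> [<-|->]; [rewrite divfK | rewrite mulfK].
Qed.

Lemma equilibriumE t : equilibrium a b c d t <-> 0 < t /\ root P t.
Proof.
have E : P.[t] = t * t ^+ 3 - (a * t ^+ 3 + b * t ^+ 2 + c * t + d).
  by rewrite horner_Ppoly; ring.
rewrite /equilibrium rootE E subr_eq0 eq_sym.
split=> -[t_gt0 Et]; split=> //; first exact/eqP/(phi_eq_iff t_gt0).
exact/(phi_eq_iff t_gt0)/eqP.
Qed.

(* Successive divided differences of P at t1, t2, t3; the last root is then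
   read off from the x^3 coefficient. *)
Lemma Ppoly_factor3 x {t1 t2 t3} : t1 != t2 -> t1 != t3 -> t2 != t3 ->
  root P t1 -> root P t2 -> root P t3 ->
  P.[x] = (x - t1) * (x - t2) * (x - t3) * (x - (a - t1 - t2 - t3)).
Proof.
move=> t12 t13 t23 /rootP P1 /rootP P2 /rootP P3.
have cancel (u v k : R) : u != v -> (v - u) * k = 0 -> k = 0.
  by move=> uv /eqP; rewrite mulf_eq0 subr_eq0 eq_sym (negPf uv) => /eqP.
pose D1 y := y ^+ 3 + y ^+ 2 * t1 + y * t1 ^+ 2 + t1 ^+ 3
  - a * (y ^+ 2 + y * t1 + t1 ^+ 2) - b * (y + t1) - c.
pose D2 y := y ^+ 2 + y * t2 + t2 ^+ 2 + t1 * (y + t2) + t1 ^+ 2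
  - a * (y + t2 + t1) - b.
have E1 y : P.[y] = P.[t1] + (y - t1) * D1 y by rewrite !horner_Ppoly /D1; ring.
have E2 y : D1 y = D1 t2 + (y - t2) * D2 y by rewrite /D1 /D2; ring.
have E3 y : D2 y = D2 t3 + (y - t3) * (y - (a - t1 - t2 - t3)).
  by rewrite /D2; ring.
have D12 : D1 t2 = 0 by apply: (cancel _ _ _ t12); rewrite -P2 E1 P1 add0r.
have D13 : D1 t3 = 0 by apply: (cancel _ _ _ t13); rewrite -P3 E1 P1 add0r.
have D23 : D2 t3 = 0 by apply: (cancel _ _ _ t23); rewrite -D13 E2 D12 add0r.
by rewrite E1 P1 add0r E2 D12 add0r E3 D23 add0r; ring.
Qed.

Lemma Ppoly_lt0_between_roots {t1 t2 t3 x} : 0 < d -> 0 < t1 -> t1 < t2 ->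
  t2 < x < t3 -> root P t1 -> root P t2 -> root P t3 -> P.[x] < 0.
Proof.
move=> d_gt0 t1_gt0 t12 /andP[t2x xt3] P1 P2 P3.
have t23 : t2 < t3 by apply: lt_trans xt3.
have t2_gt0 : 0 < t2 by apply: lt_trans t12.
have t3_gt0 : 0 < t3 by apply: lt_trans t23.
have factor y := Ppoly_factor3 y (negbT (lt_eqF t12))
  (negbT (lt_eqF (lt_trans t12 t23))) (negbT (lt_eqF t23)) P1 P2 P3.
set r := a - t1 - t2 - t3 in factor.
have r_lt0 : r < 0.
  have : t1 * t2 * t3 * r < 0.
    have -> : t1 * t2 * t3 * r = P.[0] by rewrite factor; ring.
    by rewrite horner_Ppoly; lra.
  by rewrite pmulr_rlt0 // !mulr_gt0.
have t1x : t1 < x by apply: lt_trans t2x.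
have rx : r < x by apply: lt_trans r_lt0 (lt_trans t2_gt0 t2x).
have -> : P.[x] = (x - t1) * (x - t2) * (x - r) * (x - t3).
  by rewrite factor; ring.
by rewrite pmulr_rlt0 ?subr_lt0 // !mulr_gt0 ?subr_gt0.
Qed.

End Quartic.

Section TwoCycle.
Context {R : rcfType} {a b c d p q : R}.
Hypotheses (a_gt0 : 0 < a) (d_gt0 : 0 < d).
Hypotheses (cycle_pq : two_cycle a b c d p q) (p_lt_q : p < q).
Local Notation P := (Ppoly a b c d).

Let p_gt0 : 0 < p. Proof. by case: cycle_pq. Qed.
Let q_gt0 : 0 < q. Proof. by case: cycle_pq. Qed.

Let Ep : a * p ^+ 3 + b * p ^+ 2 + c * p + d = q * p ^+ 3.
Proof. by case: cycle_pq => _ _ _ Hp _; exact: (phi_eq_iff p_gt0).1. Qed.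

Let Eq : a * q ^+ 3 + b * q ^+ 2 + c * q + d = p * q ^+ 3.
Proof. by case: cycle_pq => _ _ _ _ Hq; exact: (phi_eq_iff q_gt0).1. Qed.

(* Eliminating c and d with the two cycle equations. *)
Lemma Ppoly_cycle_identity x :
  p * q * P.[x] = p * q * x ^+ 2 * (x ^+ 2 - p * q)
                  - (p - x) * (q - x) * (a * p * q * x + d).
Proof.
apply/eqP; rewrite -subr_eq0; apply/eqP.
apply: (mulfI (_ : p - q != 0)); first by rewrite subr_eq0 lt_eqF.
rewrite mulr0.
have -> : (p - q) * (p * q * P.[x] - (p * q * x ^+ 2 * (x ^+ 2 - p * q)
            - (p - x) * (q - x) * (a * p * q * x + d)))
  = q * x * (q - x) * (a * p ^+ 3 + b * p ^+ 2 + c * p + d - q * p ^+ 3)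
    - p * x * (p - x) * (a * q ^+ 3 + b * q ^+ 2 + c * q + d - p * q ^+ 3).
  by rewrite horner_Ppoly; ring.
by rewrite Ep Eq !subrr !mulr0 subrr.
Qed.

Lemma Ppoly_cycle_lt0 {x} : 0 < x -> x <= p -> P.[x] < 0.
Proof.
move=> x_gt0 xp; have xq : x < q by apply: le_lt_trans p_lt_q.
rewrite -(pmulr_rlt0 _ (mulr_gt0 p_gt0 q_gt0)) Ppoly_cycle_identity.
have x2_lt : x ^+ 2 < p * q.
  by rewrite expr2 (le_lt_trans (ler_wpM2r (ltW x_gt0) xp)) // ltr_pM2l.
have neg : p * q * x ^+ 2 * (x ^+ 2 - p * q) < 0.
  by rewrite pmulr_rlt0 ?subr_lt0 // !mulr_gt0 // exprn_gt0.
have nonneg : 0 <= (p - x) * (q - x) * (a * p * q * x + d).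
  have lin_gt0 : 0 < a * p * q * x + d by rewrite addr_gt0 // !mulr_gt0.
  by rewrite mulr_ge0 ?(ltW lin_gt0) // mulr_ge0 // subr_ge0 // ltW.
lra.
Qed.

Lemma Ppoly_cycle_gt0 : 0 < P.[q].
Proof.
have -> : P.[q] = q * q ^+ 3 - (a * q ^+ 3 + b * q ^+ 2 + c * q + d).
  by rewrite horner_Ppoly; ring.
by rewrite Eq -mulrBl mulr_gt0 ?exprn_gt0 // subr_gt0.
Qed.

Lemma equilibrium_cycle_gt {t} : equilibrium a b c d t -> p < t.
Proof.
case/equilibriumE=> t_gt0 /rootP Pt; rewrite ltNge; apply/negP => tp.
by move: (Ppoly_cycle_lt0 t_gt0 tp); rewrite Pt ltxx.
Qed.

Lemma equilibrium_cycle_neq {t} : equilibrium a b c d t -> t != q.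
Proof.
case/equilibriumE=> _ /rootP Pt; apply/eqP => tq.
by move: Ppoly_cycle_gt0; rewrite -tq Pt ltxx.
Qed.

Lemma exists_equilibrium_cycle : exists2 t, equilibrium a b c d t & t < q.
Proof.
have Pp_lt0 : P.[p] * P.[q] < 0.
  by rewrite nmulr_rlt0 ?Ppoly_cycle_gt0 // Ppoly_cycle_lt0.
have [t /itvP t_pq Pt] := poly_ivtoo (ltW p_lt_q) Pp_lt0.
exists t; last by rewrite t_pq.
by apply/equilibriumE; rewrite Pt (lt_trans p_gt0) ?t_pq.
Qed.

Lemma min_equilibrium_lt_cycle t0 :
  (forall t, equilibrium a b c d t -> t0 <= t) -> t0 < q.
Proof.
move=> le_t0; have [t /le_t0 t0_t t_q] := exists_equilibrium_cycle.
exact: le_lt_trans t_q.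
Qed.

Lemma cycle_not_between_upper_equilibria {t1 t2 t3} :
  equilibrium a b c d t1 -> equilibrium a b c d t2 -> equilibrium a b c d t3 ->
  t1 < t2 -> ~~ (t2 < q < t3).
Proof.
move=> /equilibriumE[t1_gt0 P1] /equilibriumE[_ P2] /equilibriumE[_ P3] t12.
apply/negP => q_mid.
have := Ppoly_lt0_between_roots d_gt0 t1_gt0 t12 q_mid P1 P2 P3.
by rewrite ltNge (ltW Ppoly_cycle_gt0).
Qed.

Lemma cycle_between_equilibria_no_dbl_root_max {t1 t2} :
  (forall x, equilibrium a b c d x <-> x = t1 \/ x = t2) ->
  t1 < q < t2 -> ~ exists t, dbl_root_max a b c d t.
Proof.
move=> equil q_mid [t [t_gt0 Pt _ max_t]].
have t_end : t = t1 \/ t = t2 by apply/equil/equilibriumE.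
have p_t1 : p < t1 by apply: equilibrium_cycle_gt; apply/equil; left.
apply: (root_not_local_max _ q_mid Ppoly_cycle_gt0 _ Pt max_t).
  move=> x /andP[t1x xt2]; apply/negP => Px.
  have x_gt0 : 0 < x by rewrite (lt_trans p_gt0) // (lt_trans p_t1).
  have /equil[] : equilibrium a b c d x by apply/equilibriumE.
    by move=> x_t1; move: t1x; rewrite x_t1 ltxx.
  by move=> x_t2; move: xt2; rewrite x_t2 ltxx.
have t12 : t1 < t2 by case/andP: q_mid; apply: lt_trans.
by case: t_end => ->; rewrite lexx ltW.
Qed.

Lemma cycle_two_equilibria {t1 t2} : t1 < t2 ->
  (forall x, equilibrium a b c d x <-> x = t1 \/ x = t2) ->
  [/\ p < t1, t1 < q & q < t2 \/ t2 < q].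
Proof.
move=> t12 equil; have eq2 : equilibrium a b c d t2 by apply/equil; right.
split; first by apply/equilibrium_cycle_gt/equil; left.
  by apply: min_equilibrium_lt_cycle => x /equil[] ->; rewrite ?lexx ?ltW.
by apply/orP; rewrite -neq_lt eq_sym equilibrium_cycle_neq.
Qed.

Lemma cycle_three_equilibria {t1 t2 t3} : t1 < t2 -> t2 < t3 ->
  (forall x, equilibrium a b c d x <-> [\/ x = t1, x = t2 | x = t3]) ->
  [/\ p < t1, t1 < q & q < t2 \/ t3 < q].
Proof.
move=> t12 t23 equil.
have [eq1 eq2 eq3] : [/\ equilibrium a b c d t1, equilibrium a b c d t2
                       & equilibrium a b c d t3].
  by split; apply/equil; [apply: Or31 | apply: Or32 | apply: Or33].
split; first exact: equilibrium_cycle_gt.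
  apply: min_equilibrium_lt_cycle => x /equil[] ->; rewrite ?lexx ?ltW //.
  exact: lt_trans t23.
have [q_t2|t2_q|q_t2] := ltgtP q t2; first by left.
  right; rewrite lt_neqAle equilibrium_cycle_neq // leNgt.
  by move: (cycle_not_between_upper_equilibria eq1 eq2 eq3 t12); rewrite t2_q.
by move: (equilibrium_cycle_neq eq2); rewrite q_t2 eqxx.
Qed.

End TwoCycle.

Theorem lemma4 (R : rcfType) (a b c d p q : R) :
  0 < a -> 0 < b -> 0 < d ->
  (* c > c_-, c_- being the unique negative zero of Q *)
  (forall cm : R, cm < 0 -> root (Qpoly a b d) cm -> cm < c) ->
  two_cycle a b c d p q -> p < q ->
  [/\
   (* (a) unique equilibrium *)
   (forall t, (forall x, equilibrium a b c d x <-> x = t) -> p < t < q),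
   (* (b) exactly two equilibria *)
   (forall t1 t2, t1 < t2 ->
      (forall x, equilibrium a b c d x <-> x = t1 \/ x = t2) ->
      (is_cm a b d c -> (p < t1 /\ t1 < q /\ q < t2) \/ (p < t1 /\ t2 < q)) /\
      (is_cM a b d c -> p < t1 /\ t2 < q))
   &
   (* (c) exactly three equilibria *)
   (forall t1 t2 t3, t1 < t2 -> t2 < t3 ->
      (forall x, equilibrium a b c d x <-> [\/ x = t1, x = t2 | x = t3]) ->
      (p < t1 /\ t1 < q /\ q < t2) \/ (p < t1 /\ t3 < q))].
Proof.
move=> a_gt0 _ d_gt0 _ cycle_pq p_lt_q.
split.
- move=> t equil; have eq_t : equilibrium a b c d t by apply/equil.
  rewrite (equilibrium_cycle_gt a_gt0 d_gt0 cycle_pq p_lt_q eq_t).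
  apply: (min_equilibrium_lt_cycle a_gt0 d_gt0 cycle_pq p_lt_q).
  by move=> x /equil ->.
- move=> t1 t2 t12 equil.
  have [p_t1 t1_q [q_t2|t2_q]] :=
    cycle_two_equilibria a_gt0 d_gt0 cycle_pq p_lt_q t12 equil; last first.
    by split=> _; first right.
  split=> [_|[cb [_ _ _ max_t _]]]; first by left.
  have q_mid : t1 < q < t2 by rewrite t1_q.
  by case: (cycle_between_equilibria_no_dbl_root_max a_gt0 d_gt0 cycle_pq p_lt_q
    equil q_mid max_t).
- move=> t1 t2 t3 t12 t23 equil.
  by have [p_t1 t1_q [q_t2|t3_q]] :=
    cycle_three_equilibria a_gt0 d_gt0 cycle_pq p_lt_q t12 t23 equil;
    [left | right].
Qed.
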